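(* Setting and construction as in the context. Assume $g$ is convex and Lipschitz continuous. Then $\underline{v}$ is a continuous viscosity subsolution of $-v_t(t,x)+H(t,x,\nabla v(t,x))=0$ on $(0,T)\times\mathbb{R}^n$, where $H(t,x,p)=\max_{u\in\mathbb{U}}\min_{d\in\mathbb{D}}\langle -p,A(t)x+B(t)u+E(t)d\rangle$.
   Context: Fix $T>0$, integers $n,m,\ell\ge1$, $A\in C([0,T];\mathbb{R}^{n\times n})$, $B\in C([0,T];\mathbb{R}^{n\times m})$, $E\in C([0,T];\mathbb{R}^{n\times\ell})$, compact convex nonempty $\mathbb{U}\subset\mathbb{R}^m$, $\mathbb{D}\subset\mathbb{R}^\ell$, and $g\in C(\mathbb{R}^n;\mathbb{R})$. $D^-g(\bar x)$ is the set of $p\in\mathbb{R}^n$ with $\liminf_{x\to\bar x}\frac{g(x)-g(\bar x)-\langle p,x-\bar x\rangle}{\|x-\bar x\|}\ge0$. Construction: $N\in\mathbb{N}$, levels $\gamma_1,\dots,\gamma_N\in g(\mathbb{R}^n)$, $n_k\in\mathbb{N}$, points $\bar x_{i,k}\in g^{-1}(\{\gamma_k\})$ and $p_{i,k}\in D^-g(\bar x_{i,k})$; $(\lambda_{i,k},q_{i,k})$ is the solution on $[0,T]$ of $\dot\lambda(s)=-A(s)'\lambda(s)$, $\dot q(s)=\max_{u\in\mathbb{U}}\min_{d\in\mathbb{D}}\langle-\lambda(s),B(s)u+E(s)d\rangle$, with $\lambda_{i,k}(T)=p_{i,k}$, $q_{i,k}(T)=-\langle p_{i,k},\bar x_{i,k}\rangle+\gamma_k$;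 and $\underline{v}(t,x)=\max_{k}\max_{i}\big(\langle\lambda_{i,k}(t),x\rangle+q_{i,k}(t)\big)$. For continuous $f$ and $(t_0,x_0)\in(0,T)\times\mathbb{R}^n$, $D^+f(t_0,x_0)$ is the set of $(q,p)\in\mathbb{R}\times\mathbb{R}^n$ with $\limsup_{(t,x)\to(t_0,x_0)}\frac{f(t,x)-f(t_0,x_0)-\langle(q,p),(t,x)-(t_0,x_0)\rangle}{\|(t,x)-(t_0,x_0)\|}\le0$; $f$ is a viscosity subsolution if $-q+H(t_0,x_0,p)\le 0$ for all such $(t_0,x_0)$ and $(q,p)\in D^+f(t_0,x_0)$. *)

From HB Require Import structures.
From mathcomp Require Import all_boot all_order all_algebra.
From mathcomp Require Import all_classical all_reals all_analysis.
Set Implicit Arguments. Unset Strict Implicit. Unset Printing Implicit Defensive.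
Import Order.TTheory GRing.Theory Num.Theory.
Import numFieldNormedType.Exports.
Local Open Scope classical_set_scope.
Local Open Scope ring_scope.

Section Defs.
Variable R : realType.

Definition dotv (n : nat) (p x : 'cV[R]_n) : R := \sum_(i < n) p i 0 * x i 0.
Definition enorm (n : nat) (x : 'cV[R]_n) : R := Num.sqrt (dotv x x).

Definition convex_setv (n : nat) (S : set 'cV[R]_n) : Prop :=
  forall x y, S x -> S y -> forall t : R, 0 <= t <= 1 ->
    S (t *: x + (1 - t) *: y).

Definition convex_fun (n : nat) (g : 'cV[R]_n -> R) : Prop :=
  forall x y (t : R), 0 <= t <= 1 ->
    g (t *: x + (1 - t) *: y) <= t * g x + (1 - t) * g y.

Definition lipschitz_fun (n : nat) (g : 'cV[R]_n -> R) : Prop :=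
  exists L : R, forall x y, `|g x - g y| <= L * enorm (x - y).

(* max_{u in U} min_{d in D} f u d  (attained for compact nonempty U, D and
   continuous f, so written as sup/inf) *)
Definition maxmin (m l : nat) (U : set 'cV[R]_m) (D : set 'cV[R]_l)
  (f : 'cV[R]_m -> 'cV[R]_l -> R) : R :=
  sup [set inf [set f u d | d in D] | u in U].

Definition Ham (n m l : nat) (A : R -> 'M[R]_n) (B : R -> 'M[R]_(n, m))
  (E : R -> 'M[R]_(n, l)) (U : set 'cV[R]_m) (D : set 'cV[R]_l)
  (t : R) (x p : 'cV[R]_n) : R :=
  maxmin U D (fun u d => dotv (- p) (A t *m x + B t *m u + E t *m d)).

(* Frechet subdifferential D^- g(xb): liminf_{x -> xb} (...)/|x - xb| >= 0 *)
Definition subdiff (n : nat) (g : 'cV[R]_n -> R) (xb p : 'cV[R]_n) : Prop :=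
  forall eps : R, 0 < eps -> exists2 delta : R, 0 < delta &
    forall x, 0 < enorm (x - xb) < delta ->
      g x - g xb - dotv p (x - xb) >= - eps * enorm (x - xb).

Definition enorm_tx (n : nat) (t : R) (x : 'cV[R]_n) : R :=
  Num.sqrt (t ^+ 2 + dotv x x).

(* Frechet superdifferential D^+ f(t0,x0):
   limsup_{(t,x) -> (t0,x0)} (...)/|(t,x)-(t0,x0)| <= 0 *)
Definition superdiff (n : nat) (f : R -> 'cV[R]_n -> R) (t0 : R)
  (x0 : 'cV[R]_n) (qq : R) (pp : 'cV[R]_n) : Prop :=
  forall eps : R, 0 < eps -> exists2 delta : R, 0 < delta &
    forall t x, 0 < enorm_tx (t - t0) (x - x0) < delta ->
      f t x - f t0 x0 - (qq * (t - t0) + dotv pp (x - x0))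
        <= eps * enorm_tx (t - t0) (x - x0).

Definition continuous_at_tx (n : nat) (f : R -> 'cV[R]_n -> R) (t0 : R)
  (x0 : 'cV[R]_n) : Prop :=
  forall eps : R, 0 < eps -> exists2 delta : R, 0 < delta &
    forall t x, enorm_tx (t - t0) (x - x0) < delta -> `|f t x - f t0 x0| < eps.

Definition visc_subsol (n : nat) (T : R) (H : R -> 'cV[R]_n -> 'cV[R]_n -> R)
  (f : R -> 'cV[R]_n -> R) : Prop :=
  forall t0 x0, 0 < t0 < T -> forall qq pp, superdiff f t0 x0 qq pp ->
    - qq + H t0 x0 pp <= 0.

Definition vlow (n N : nat) (nk : 'I_N -> nat)
  (lam : forall k : 'I_N, 'I_(nk k) -> R -> 'cV[R]_n)
  (q : forall k : 'I_N, 'I_(nk k) -> R -> R) (t : R) (x : 'cV[R]_n) : R :=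
  sup [set y | exists (k : 'I_N) (i : 'I_(nk k)),
                 y = dotv (lam k i t) x + q k i t].

End Defs.

(* Each affine piece phi(t, x) = <lam(t), x> + q(t) of the maximum solves the
   equation classically: by the adjoint equation for lam and the definition
   of q, d/dt phi = -<lam, A x> + max_u min_d <-lam, B u + E d>, which is
   H(t, x, lam).  A finite maximum of continuous pieces is continuous.  A
   superdifferential (qq, pp) of the maximum at (t0, x0) is also one of any
   piece active there, because that piece lies below the maximum and touches
   it at (t0, x0); and a superdifferential of a function that is affine in
   space and differentiable in time is its gradient.  Hence
   -qq + H(t0, x0, pp) = 0. *)

From HB Require Import structures.
From mathcomp Require Import all_boot all_order all_algebra.
From mathcomp Require Import all_classical all_reals all_analysis lra.
Set Implicit Arguments.
Unset Strict Implicit.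
Unset Printing Implicit Defensive.
Import Order.TTheory GRing.Theory Num.Theory.
Import numFieldNormedType.Exports.
Local Open Scope classical_set_scope.
Local Open Scope ring_scope.

Section dot_product.
Variable R : realType.

Lemma dotvC n (a b : 'cV[R]_n) : dotv a b = dotv b a.
Proof. by apply: eq_bigr => i _; rewrite mulrC. Qed.

Lemma dotvDr n (a x y : 'cV[R]_n) : dotv a (x + y) = dotv a x + dotv a y.
Proof.
by rewrite /dotv -big_split; apply: eq_bigr => i _; rewrite mxE mulrDr.
Qed.

Lemma dotvZr n (k : R) (a x : 'cV[R]_n) : dotv a (k *: x) = k * dotv a x.
Proof.
by rewrite /dotv mulr_sumr; apply: eq_bigr => i _; rewrite mxE mulrCA.
Qed.

Lemma dotvNr n (a x : 'cV[R]_n) : dotv a (- x) = - dotv a x.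
Proof. by rewrite -scaleN1r dotvZr mulN1r. Qed.

Lemma dotvBr n (a x y : 'cV[R]_n) : dotv a (x - y) = dotv a x - dotv a y.
Proof. by rewrite dotvDr dotvNr. Qed.

Lemma dotvBl n (a b x : 'cV[R]_n) : dotv (a - b) x = dotv a x - dotv b x.
Proof. by rewrite dotvC dotvBr !(dotvC x). Qed.

Lemma dotvNl n (a x : 'cV[R]_n) : dotv (- a) x = - dotv a x.
Proof. by rewrite dotvC dotvNr dotvC. Qed.

Lemma dotv_mulmx n k (a : 'cV[R]_n) (M : 'M[R]_(n, k)) (x : 'cV[R]_k) :
  dotv a (M *m x) = dotv (M^T *m a) x.
Proof.
have dotvE m (b y : 'cV[R]_m) : dotv b y = (b^T *m y) 0 0.
  by rewrite mxE; apply: eq_bigr => i _; rewrite mxE.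
by rewrite !dotvE trmx_mul trmxK mulmxA.
Qed.

Lemma sqr_coord_le_dotv n (x : 'cV[R]_n) i : x i 0 ^+ 2 <= dotv x x.
Proof.
rewrite /dotv (bigD1 i) //= expr2 lerDl.
by apply: sumr_ge0 => j _; rewrite -expr2 sqr_ge0.
Qed.

Lemma dotvv_ge0 n (x : 'cV[R]_n) : 0 <= dotv x x.
Proof. by apply: sumr_ge0 => i _; rewrite -expr2 sqr_ge0. Qed.

Lemma dotvv_eq0 n (x : 'cV[R]_n) : dotv x x = 0 -> x = 0.
Proof.
move=> xx0; apply/matrixP => i j; rewrite ord1 mxE.
apply/eqP; rewrite -sqrf_eq0 eq_le sqr_ge0 andbT -xx0.
exact: sqr_coord_le_dotv.
Qed.

Lemma normr_dotv_le n (a x : 'cV[R]_n) :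
  `|dotv a x| <= (\sum_i `|a i 0|) * `|x|.
Proof.
rewrite mulr_suml (le_trans (ler_norm_sum _ _ _)) //.
apply: ler_sum => i _; rewrite normrM ler_wpM2l //.
rewrite [leRHS]mx_normrE.
exact: (le_bigmax _ (fun ij : 'I_n * 'I_1 => `|x ij.1 ij.2|) (i, 0)).
Qed.

Lemma normr_coord_le_enorm n (x : 'cV[R]_n) i : `|x i 0| <= enorm x.
Proof. by rewrite -(sqrtr_sqr (x i 0)) ler_wsqrtr // sqr_coord_le_dotv. Qed.

Lemma normr_le_enorm_tx n (t : R) (x : 'cV[R]_n) : `|t| <= enorm_tx t x.
Proof. by rewrite -sqrtr_sqr ler_wsqrtr // lerDl dotvv_ge0. Qed.

Lemma enorm_le_enorm_tx n (t : R) (x : 'cV[R]_n) : enorm x <= enorm_tx t x.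
Proof. by rewrite ler_wsqrtr // lerDr sqr_ge0. Qed.

Lemma enorm_txZ n (h t : R) (x : 'cV[R]_n) :
  enorm_tx (h * t) (h *: x) = `|h| * enorm_tx t x.
Proof.
rewrite /enorm_tx dotvZr dotvC dotvZr mulrA -expr2 exprMn -mulrDr.
by rewrite sqrtrM ?sqr_ge0 // sqrtr_sqr.
Qed.

Lemma dotv0r n (a : 'cV[R]_n) : dotv a 0 = 0.
Proof. by rewrite -(scale0r 0) dotvZr mul0r. Qed.

Lemma enorm_tx_t0 n (t : R) : enorm_tx t (0 : 'cV[R]_n) = `|t|.
Proof. by rewrite /enorm_tx dotv0r addr0 sqrtr_sqr. Qed.

End dot_product.

Section finite_max.
Variable R : realType.

Lemma sup_range_fin (J : finType) (j0 : J) (F : J -> R) :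
  sup (range F) = F [arg max_(j > j0) F j]%O.
Proof.
case: arg_maxP => // j _ jmax; apply/le_anti/andP; split.
  by apply: ge_sup; [exists (F j0), j0 | move=> _ [i _ <-]; exact: jmax].
by apply: ub_le_sup; [exists (F j) => _ [i _ <-]; exact: jmax | exists j].
Qed.

Lemma continuous_fin_max (X : topologicalType) (J : finType) (F : J -> X -> R)
    (f : X -> R) (y0 : X) :
  (forall j y, F j y <= f y) -> (forall y, exists j, f y = F j y) ->
  (forall j, {for y0, continuous (F j)}) -> {for y0, continuous f}.
Proof.
move=> Fle fattained Fcont; apply/cvgrPdist_lt => e e0.
have : \forall y \near y0, forall j, `|F j y0 - F j y| < e.
  by apply: filter_forall => j; move/cvgrPdist_lt : (Fcont j); apply.
apply: filter_app; near=> y => near_all.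
have [a fa] := fattained y; have [b fb] := fattained y0.
move: (near_all a) (near_all b) (Fle a y0) (Fle b y).
rewrite fa fb !ltr_norml => /andP[? ?] /andP[? ?] ? ?.
by apply/andP; split; lra.
Unshelve. all: by end_near. Qed.

End finite_max.

Section superdifferential.
Variable R : realType.

Lemma linear_le_small_eq0 (a K : R) :
  (forall e, 0 < e -> exists2 d, 0 < d &
     forall h, 0 < `|h| < d -> h * a <= e * K * `|h|) -> a = 0.
Proof.
move=> small; apply/normr0_eq0/le_anti; rewrite normr_ge0 andbT.
apply/ler_addgt0Pr => e e0; rewrite add0r.
have K1 : 0 < `|K| + 1 by have := normr_ge0 K; lra.
set c := e / (`|K| + 1).
have c0 : 0 < c by rewrite divr_gt0.
have cK : c * K <= e.
  apply: le_trans (ler_wpM2l (ltW c0) (ler_norm K)) _.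
  rewrite /c mulrAC ler_pdivrMr // ler_wpM2l ?ltW //; lra.
have [d d0 hd] := small c c0.
have h0 : 0 < d / 2 by rewrite divr_gt0.
have h0d : 0 < d / 2 < d by rewrite h0 /=; lra.
have up := hd (d / 2); have lo := hd (- (d / 2)).
rewrite normrN gtr0_norm // in up lo; move: {up lo}(up h0d) (lo h0d) => up lo.
apply: le_trans cK; rewrite ler_norml; apply/andP; split.
  by rewrite -(ler_pM2l h0); lra.
by rewrite -(ler_pM2l h0); lra.
Qed.

Lemma is_derive_approx (f : R -> R) (t0 G : R) : is_derive t0 1 f G ->
  forall e, 0 < e -> exists2 d, 0 < d &
    forall h, `|h| < d -> `|f (t0 + h) - f t0 - h * G| <= e * `|h|.
Proof.
move=> fG e e0.
have quot_cvg := @ex_derive _ _ _ _ _ _ _ fG.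
rewrite /derivable -[lim _]/('D_1 f t0) derive_val in quot_cvg.
move/cvgrPdist_le : quot_cvg => /(_ e e0) /nbhs_ballP [d /= d0 hd].
exists d => // h hd'.
have [->|h0] := eqVneq h 0.
  by rewrite addr0 subrr mul0r subr0 !normr0 mulr0.
have := hd h; rewrite /ball /= sub0r normrN => /(_ hd' h0).
rewrite /= /shift /= -[h%:A]/(h *: 1) scaler1 addrC.
rewrite addrC (addrC h t0) => quot_le.
have -> : f (t0 + h) - f t0 - h * G = h * (h^-1 * (f (t0 + h) - f t0) - G).
  by rewrite mulrBr mulrA divff ?mul1r // mulrC.
by rewrite normrM mulrC ler_wpM2r // distrC.
Qed.

Lemma superdiff_minorant n (f phi : R -> 'cV[R]_n -> R) t0 x0 qq pp :
  (forall t x, phi t x <= f t x) -> phi t0 x0 = f t0 x0 ->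
  superdiff f t0 x0 qq pp -> superdiff phi t0 x0 qq pp.
Proof.
move=> le_phi eq_phi sd e e0; have [d d0 hd] := sd e e0.
exists d => // t x tx; apply: le_trans (hd t x tx).
by have := le_phi t x; rewrite eq_phi; lra.
Qed.

Lemma superdiff_line n (f : R -> 'cV[R]_n -> R) t0 x0 qq pp tau w :
  superdiff f t0 x0 qq pp -> 0 < enorm_tx tau w ->
  forall e, 0 < e -> exists2 d, 0 < d & forall h, 0 < `|h| < d ->
    f (t0 + h * tau) (x0 + h *: w) - f t0 x0 - h * (qq * tau + dotv pp w)
      <= e * enorm_tx tau w * `|h|.
Proof.
move=> sd tw0 e e0; have [d d0 hd] := sd e e0.
exists (d / enorm_tx tau w) => [|h /andP[h0 hd']]; first by rewrite divr_gt0.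
have := hd (t0 + h * tau) (x0 + h *: w).
rewrite [t0 + _]addrC [x0 + _]addrC !addrK enorm_txZ dotvZr mulr_gt0 //=.
rewrite -ltr_pdivlMr // => /(_ hd'); lra.
Qed.

Lemma superdiff_affine_space n (f : R -> 'cV[R]_n -> R) t0 x0 qq pp L c :
  superdiff f t0 x0 qq pp -> (forall x, f t0 x = dotv L x + c) -> pp = L.
Proof.
move=> sd faff; set w := L - pp.
suff /dotvv_eq0 /eqP : dotv w w = 0 by rewrite subr_eq0 => /eqP.
have [//|ww0] := eqVneq (dotv w w) 0.
have tw0 : 0 < enorm_tx 0 w.
  by rewrite sqrtr_gt0 expr0n add0r lt_def ww0 dotvv_ge0.
apply: (linear_le_small_eq0 (K := enorm_tx 0 w)) => e e0.
have [d d0 hd] := superdiff_line sd tw0 e0.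
exists d => // h /hd; rewrite mulr0 addr0 !faff dotvDr dotvZr.
have -> : dotv w w = dotv L w - dotv pp w by rewrite dotvBl.
lra.
Qed.

Lemma superdiff_time_derive n (f : R -> 'cV[R]_n -> R) t0 x0 qq pp G :
  superdiff f t0 x0 qq pp -> is_derive t0 1 (fun t => f t x0) G -> qq = G.
Proof.
move=> sd fG; apply/esym/subr0_eq/(linear_le_small_eq0 (K := 2)) => e e0.
have t10 : 0 < enorm_tx 1 (0 : 'cV[R]_n) by rewrite enorm_tx_t0 normr1.
have [d1 d10 hd1] := superdiff_line sd t10 e0.
have [d2 d20 hd2] := is_derive_approx fG e0.
exists (Num.min d1 d2) => [|h /andP[h0]]; first by rewrite lt_min d10 d20.
rewrite lt_min => /andP[hd1' hd2'].
move: (hd1 h) (hd2 h hd2'); rewrite h0 hd1' enorm_tx_t0 normr1 !mulr1.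
rewrite scaler0 dotv0r !addr0 ler_norml => /(_ isT) ? /andP[? ?]; lra.
Qed.

End superdifferential.

Section hamiltonian.
Variable R : realType.

Lemma sup_image_addl T (S : set T) (f : T -> R) (c : R) :
  has_sup (f @` S) -> sup [set c + f x | x in S] = c + sup (f @` S).
Proof.
move=> sup_f.
have sup_c : has_sup [set c] by split; [exists c | exists c => x ->].
rewrite -[in RHS](sup1 c) -sup_sumE //; congr sup.
by apply/seteqP; split => [_ [x Sx <-]|_ [_ -> [_ [x Sx <-] <-]]];
  [exists c => //; exists (f x) => //; exists x | exists x].
Qed.

Lemma inf_image_addl T (S : set T) (f : T -> R) (c : R) :
  has_inf (f @` S) -> inf [set c + f x | x in S] = c + inf (f @` S).
Proof.
move=> inf_f.
have inf_c : has_inf [set c] by split; [exists c | exists c => x ->].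
rewrite -[in RHS](inf1 c) -inf_sumE //; congr inf.
by apply/seteqP; split => [_ [x Sx <-]|_ [_ -> [_ [x Sx <-] <-]]];
  [exists c => //; exists (f x) => //; exists x | exists x].
Qed.

(* The bound [C] keeps [sup] and [inf] away from their junk values on
   unbounded sets. *)
Lemma maxmin_addl m l (U : set 'cV[R]_m) (D : set 'cV[R]_l) f (c C : R) :
  U !=set0 -> D !=set0 -> (forall u d, U u -> D d -> `|f u d| <= C) ->
  maxmin U D (fun u d => c + f u d) = c + maxmin U D f.
Proof.
move=> [u0 Uu0] [d0 Dd0] fC.
have inf_f u : U u -> has_inf [set f u d | d in D].
  move=> Uu; split; first by exists (f u d0), d0.
  exists (- C) => _ [d Dd <-]; have := fC u d Uu Dd; rewrite ler_norml.
  by case/andP.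
have sup_inf : has_sup [set inf [set f u d | d in D] | u in U].
  split; first by exists (inf [set f u0 d | d in D]), u0.
  exists C => _ [u Uu <-]; apply: le_trans (ge_inf (inf_f u Uu).2 _) _.
    by exists d0.
  by have := fC u d0 Uu Dd0; rewrite ler_norml => /andP[].
rewrite /maxmin -sup_image_addl //; congr sup; apply: eq_imagel => u Uu.
exact: inf_image_addl (inf_f u Uu).
Qed.

Lemma compact_norm_le n (U : set 'cV[R]_n) : compact U ->
  exists M, forall u, U u -> `|u| <= M.
Proof.
move=> /compact_bounded [M [_ hM]]; exists (`|M| + 1) => u Uu.
by apply: (hM (`|M| + 1)) => //; rewrite (le_lt_trans (ler_norm M)) // ltrDl.
Qed.

Lemma dotv_control_bounded n m l (U : set 'cV[R]_m) (D : set 'cV[R]_l)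
    (B : 'M[R]_(n, m)) (E : 'M[R]_(n, l)) (a : 'cV[R]_n) :
  compact U -> compact D -> exists C, forall u d, U u -> D d ->
    `|dotv a (B *m u + E *m d)| <= C.
Proof.
move=> /compact_norm_le [MU hU] /compact_norm_le [MD hD].
exists ((\sum_i `|(B^T *m a) i 0|) * MU + (\sum_i `|(E^T *m a) i 0|) * MD).
move=> u d Uu Dd; rewrite dotvDr !dotv_mulmx (le_trans (ler_normD _ _)) //.
apply: lerD; apply: (le_trans (normr_dotv_le _ _)); apply: ler_wpM2l.
- by apply: sumr_ge0 => i _.
- exact: hU.
- by apply: sumr_ge0 => i _.
- exact: hD.
Qed.

Lemma HamE n m l (A : R -> 'M[R]_n) (B : R -> 'M[R]_(n, m))
    (E : R -> 'M[R]_(n, l)) (U : set 'cV[R]_m) (D : set 'cV[R]_l) t x p :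
  compact U -> compact D -> U !=set0 -> D !=set0 ->
  Ham A B E U D t x p = dotv (- p) (A t *m x) +
    maxmin U D (fun u d => dotv (- p) (B t *m u + E t *m d)).
Proof.
move=> cU cD U0 D0.
have [C hC] := dotv_control_bounded (B t) (E t) (- p) cU cD.
rewrite -(maxmin_addl _ U0 D0 hC) /Ham.
by congr maxmin; apply/funext => u; apply/funext => d; rewrite -addrA dotvDr.
Qed.

End hamiltonian.

Section continuity.
Variable R : realType.

Lemma continuous_at_tx_prod n (f : R -> 'cV[R]_n -> R) t0 x0 :
  {for (t0, x0), continuous (fun y : R * 'cV[R]_n => f y.1 y.2)} ->
  continuous_at_tx f t0 x0.
Proof.
move=> /cvgrPdist_lt fcont e e0.
have /nbhs_ballP [d /= d0 hd] := fcont e e0.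
exists d => // t x tx; rewrite distrC; apply: (hd (t, x)); split => /=.
  by rewrite /ball /= distrC (le_lt_trans (normr_le_enorm_tx _ (x - x0))).
split => // i j; rewrite /ball /= distrC ord1.
have := normr_coord_le_enorm (x - x0) i; rewrite !mxE => coord_le.
exact: le_lt_trans coord_le (le_lt_trans (enorm_le_enorm_tx (t - t0) _) tx).
Qed.

Lemma continuous_affine_piece n (lam : R -> 'cV[R]_n) (c : R -> R) t0 x0 :
  {for t0, continuous lam} -> {for t0, continuous c} ->
  {for (t0, x0),
    continuous (fun y : R * 'cV[R]_n => dotv (lam y.1) y.2 + c y.1)}.
Proof.
move=> clam cc.
have cfst (V : topologicalType) (f : R -> V) : {for t0, continuous f} ->
    {for (t0, x0), continuous (f \o fst)}.
  by move=> cf; apply: continuous_comp; [exact: cvg_fst | exact: cf].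
apply: continuousD; last exact: (cfst _ c cc).
have -> : (fun y : R * 'cV[R]_n => dotv (lam y.1) y.2) =
  \sum_(i < n) (fun y : R * 'cV[R]_n => lam y.1 i 0 * y.2 i 0).
  by apply/funext => y; rewrite fct_sumE.
elim/big_ind: _ => [|f g cf cg|i _].
- exact: cst_continuous.
- exact: continuousD.
have ci : {for (t0, x0),
    continuous ((fun M : 'cV[R]_n => M i 0) \o (lam \o fst))}.
  by apply: continuous_comp; [exact: (cfst _ lam clam) | exact: coord_continuous].
have cxi : {for (t0, x0), continuous ((fun M : 'cV[R]_n => M i 0) \o snd)}.
  by apply: continuous_comp; [exact: cvg_snd | exact: coord_continuous].
exact: continuousM ci cxi.
Qed.

Lemma within_itv_continuous_at (V : pseudoMetricNormedZmodType R) (f : R -> V)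
    (T t : R) :
  {within `[0, T], continuous f} -> 0 < t < T -> {for t, continuous f}.
Proof.
move=> fcont /andP[t0 tT].
have [inner _ _] := (continuous_within_itvP f (lt_trans t0 tT)).1 fcont.
by apply: inner; rewrite in_itv /= t0 tT.
Qed.

Lemma is_derive_dotv n (f : R -> 'cV[R]_n) (x df : 'cV[R]_n) (t : R) :
  is_derive t 1 f df -> is_derive t 1 (fun s => dotv (f s) x) (dotv df x).
Proof.
move=> fdf; have fder := @ex_derive _ _ _ _ _ _ _ fdf.
have coord i : is_derive t 1 (fun s => f s i 0) (df i 0).
  apply: DeriveDef; first exact: (derivable_mxP f t 1).1 fder i 0.
  by rewrite -(@derive_val _ _ _ _ _ _ _ fdf) derive_mx // mxE.
have -> : (fun s => dotv (f s) x) = \sum_(i < n) (fun s => x i 0 *: f s i 0).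
  by apply/funext => s; rewrite fct_sumE; apply: eq_bigr => i _; rewrite mulrC.
rewrite /dotv (eq_bigr (fun i => x i 0 *: df i 0)) => [|i _]; last first.
  by rewrite mulrC.
by apply: is_derive_sum => i; exact: is_deriveZ.
Qed.

End continuity.

Section value_function.
Variables (R : realType) (n N : nat) (nk : 'I_N -> nat).
Variables (lam : forall k : 'I_N, 'I_(nk k) -> R -> 'cV[R]_n)
  (q : forall k : 'I_N, 'I_(nk k) -> R -> R).

Definition vlow_piece (j : {k : 'I_N & 'I_(nk k)}) t x :=
  dotv (lam (tagged j) t) x + q (tagged j) t.

Lemma vlow_range t x :
  vlow lam q t x = sup (range (fun j => vlow_piece j t x)).
Proof.
congr sup; apply/seteqP; split=> [_ [k [i ->]]|_ [[k i] _ <-]].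
  by exists (Tagged (fun k => 'I_(nk k)) i).
by exists k, i.
Qed.

Lemma le_vlow j t x : vlow_piece j t x <= vlow lam q t x.
Proof.
rewrite vlow_range (sup_range_fin j).
by case: arg_maxP => // j' _; apply.
Qed.

Lemma vlow_attained (j0 : {k : 'I_N & 'I_(nk k)}) t x :
  exists j, vlow lam q t x = vlow_piece j t x.
Proof. by rewrite vlow_range (sup_range_fin j0); eexists. Qed.

End value_function.

Theorem lemma5 (R : realType) (T : R) (n m l : nat)
  (A : R -> 'M[R]_n) (B : R -> 'M[R]_(n, m)) (E : R -> 'M[R]_(n, l))
  (U : set 'cV[R]_m) (D : set 'cV[R]_l) (g : 'cV[R]_n -> R)
  (N : nat) (gam : 'I_N -> R) (nk : 'I_N -> nat)
  (xb : forall k : 'I_N, 'I_(nk k) -> 'cV[R]_n)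
  (p : forall k : 'I_N, 'I_(nk k) -> 'cV[R]_n)
  (lam : forall k : 'I_N, 'I_(nk k) -> R -> 'cV[R]_n)
  (q : forall k : 'I_N, 'I_(nk k) -> R -> R) :
  0 < T -> (0 < n)%N -> (0 < m)%N -> (0 < l)%N ->
  {within `[0, T], continuous A} ->
  {within `[0, T], continuous B} ->
  {within `[0, T], continuous E} ->
  compact U -> convex_setv U -> U !=set0 ->
  compact D -> convex_setv D -> D !=set0 ->
  continuous g -> convex_fun g -> lipschitz_fun g ->
  (0 < N)%N -> (forall k, 0 < nk k)%N ->
  (forall k, exists x, g x = gam k) ->
  (forall k i, g (xb k i) = gam k) ->
  (forall k i, subdiff g (xb k i) (p k i)) ->
  (* (lam_{i,k}, q_{i,k}) solves the terminal-value problem on [0,T] *)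
  (forall k i, {within `[0, T], continuous (lam k i)}) ->
  (forall k i, {within `[0, T], continuous (q k i)}) ->
  (forall k i s, 0 < s < T ->
     is_derive s 1 (lam k i) (- ((A s)^T *m lam k i s))) ->
  (forall k i s, 0 < s < T ->
     is_derive s 1 (q k i)
       (maxmin U D (fun u d => dotv (- lam k i s) (B s *m u + E s *m d)))) ->
  (forall k i, lam k i T = p k i) ->
  (forall k i, q k i T = - dotv (p k i) (xb k i) + gam k) ->
  (forall t0 x0, 0 < t0 < T -> continuous_at_tx (vlow lam q) t0 x0) /\
  visc_subsol T (Ham A B E U D) (vlow lam q).
Proof.
move=> _ _ _ _ _ _ _ cU _ U0 cD _ D0 _ _ _ N0 nk0 _ _ _ clam cq dlam dq _ _.
pose j0 := Tagged (fun k => 'I_(nk k)) (Ordinal (nk0 (Ordinal N0))).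
split=> [t0 x0 t0T | t0 x0 t0T qq pp sd].
  apply: continuous_at_tx_prod.
  apply: (continuous_fin_max (F := fun j y => vlow_piece lam q j y.1 y.2)).
  - by move=> j y; exact: le_vlow.
  - by move=> y; exact: vlow_attained j0 _ _.
  - move=> j; apply: continuous_affine_piece;
      exact: within_itv_continuous_at t0T.
have [[k i] vlow_i] := vlow_attained lam q j0 t0 x0.
have sd_i := superdiff_minorant (le_vlow lam q _) (esym vlow_i) sd.
have dpiece := is_deriveD (is_derive_dotv x0 (dlam k i t0 t0T)) (dq k i t0 t0T).
rewrite (superdiff_affine_space sd_i (fun x => erefl)).
rewrite (superdiff_time_derive sd_i dpiece) HamE // !dotvNl dotv_mulmx; lra.
Qed.
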